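(* Let $\mathcal B\subseteq P(D)$ be a Boolean algebra with $|\mathcal B|<\mathfrak b$ and let $\mathcal S=\{S_n:n\in\omega\}$ be an $s$-family with each $S_n(k)\in\mathcal B$. For $g\in\omega^\omega$ let $X_g=\bigcup_{n\in\omega}S_n(g(n))$. Then there exists $g_0\in\omega^\omega$ such that for every $g\in\omega^\omega$ with $g\ge g_0$ (pointwise) and every $A\in\mathcal B$ with $A\subseteq X_g$, there is $N\in\omega$ with $A\subseteq\bigcup_{j\le N}S_j(g(j))$.
   Context: $\mathfrak b$ is the bounding number. $\lambda$ is the product measure on $2^\omega$, $D\subseteq 2^\omega$ a fixed countable dense set, $\mathcal A_0$ the subalgebra of $P(D)$ generated by $\{C\cap D: C \text{ clopen}\}$ and the finite subsets of $D$, $\mu_0((C\cap D)\triangle F)=\lambda(C)$ for $C$ clopen and $F$ finite. An $s$-family is a countable family $\mathcal S$ of sequences $(S(k))_{k\in\omega}$ of elements of $\mathcal A_0$ with $S(0)\supseteq S(1)\supseteq\cdots$, $\bigcap_kS(k)=\emptyset$ and $\lim_k\mu_0(S(k))=0$. *)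

From Stdlib Require Import Reals List.
Import ListNotations.
Open Scope R_scope.

Definition cantor := nat -> bool.

Definition ext (w : list bool) : cantor := fun i => nth i w false.

Definition restr_eq (n : nat) (x y : cantor) : Prop :=
  forall i, (i < n)%nat -> x i = y i.

Definition depends_on (n : nat) (C : cantor -> Prop) : Prop :=
  forall x y, restr_eq n x y -> (C x <-> C y).

Definition is_open (C : cantor -> Prop) : Prop :=
  forall x, C x -> exists n, forall y, restr_eq n x y -> C y.

Definition clopen (C : cantor -> Prop) : Prop :=
  is_open C /\ is_open (fun x => ~ C x).

Definition lambda_is (C : cantor -> Prop) (r : R) : Prop :=
  exists (n : nat) (W : list (list bool)),
    depends_on n C /\ NoDup W /\
    (forall w, In w W <-> (length w = n /\ C (ext w))) /\
    r = INR (length W) / 2 ^ n.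

(* D = range of d, d injective; subsets of D are identified with subsets of nat. *)
Definition dense_enum (d : nat -> cantor) : Prop :=
  (forall i j, d i = d j -> i = j) /\
  (forall w : list bool, exists i, forall j, (j < length w)%nat -> d i j = nth j w false).

Definition finite_set (F : nat -> Prop) : Prop :=
  exists m, forall i, F i -> (i < m)%nat.

Definition trace (d : nat -> cantor) (C : cantor -> Prop) : nat -> Prop :=
  fun i => C (d i).

Definition symdiff (A F : nat -> Prop) : nat -> Prop :=
  fun i => (A i /\ ~ F i) \/ (~ A i /\ F i).

Inductive A0 (d : nat -> cantor) : (nat -> Prop) -> Prop :=
| A0_clopen : forall C, clopen C -> A0 d (trace d C)
| A0_finite : forall F, finite_set F -> A0 d F
| A0_compl : forall A, A0 d A -> A0 d (fun i => ~ A i)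
| A0_union : forall A A', A0 d A -> A0 d A' -> A0 d (fun i => A i \/ A' i)
| A0_ext : forall A A', A0 d A -> (forall i, A i <-> A' i) -> A0 d A'.

Definition mu0_is (d : nat -> cantor) (A : nat -> Prop) (r : R) : Prop :=
  exists C F, clopen C /\ finite_set F /\
    (forall i, A i <-> symdiff (trace d C) F i) /\ lambda_is C r.

Definition s_seq (d : nat -> cantor) (T : nat -> nat -> Prop) : Prop :=
  (forall k, A0 d (T k)) /\
  (forall k i, T (Datatypes.S k) i -> T k i) /\
  (forall i, ~ (forall k, T k i)) /\
  (forall eps, eps > 0 -> exists K, forall k, (K <= k)%nat ->
      exists r, mu0_is d (T k) r /\ Rabs r < eps).

Definition s_family (d : nat -> cantor) (S : nat -> nat -> nat -> Prop) : Prop :=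
  forall n, s_seq d (S n).

Definition bool_alg (B : (nat -> Prop) -> Prop) : Prop :=
  B (fun _ => False) /\
  (forall A, B A -> B (fun i => ~ A i)) /\
  (forall A A', B A -> B A' -> B (fun i => A i \/ A' i)).

(* |X| < b  : every family of functions in omega^omega indexed by X
   (i.e. of size <= |X|) is <=*-bounded *)
Definition lt_bounding (X : Type) : Prop :=
  forall F : X -> nat -> nat, exists h : nat -> nat,
    forall x, exists m, forall n, (m <= n)%nat -> (F x n <= h n)%nat.

Definition X_g (S : nat -> nat -> nat -> Prop) (g : nat -> nat) : nat -> Prop :=
  fun i => exists n, S n (g n) i.

(* For a point i and an index n let e_n(i) be a stage at which i has left the
   decreasing sequence S_n.  Fix A in B and L.  A Dickson-type argument on the
   finitely many coordinates t(0), ..., t(L-1) yields one f_{A,L} such that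
   whenever some point of A avoids S_j(t(j)) for all j < L, such a point p can
   be chosen with e_n(p) <= f_{A,L}(n) for every n.  Since |B| < b, a single
   g0 eventually dominates max_{L <= n} f_{A,L}(n) for every A in B, say from
   m_A on.  If g >= g0 and some point of A ⊆ X_g avoided S_j(g(j)) for j < m_A,
   the chosen witness p would also avoid S_n(g(n)) for n >= m_A, because
   g(n) >= e_n(p); so p would not lie in X_g. *)
From Stdlib Require Import Reals List.
From Stdlib Require Import Classical ClassicalEpsilon Lia Arith.

Local Open Scope nat_scope.

Definition update (t : nat -> nat) (i v : nat) : nat -> nat :=
  fun j => if Nat.eq_dec j i then v else t j.

Lemma update_id t i j : update t i (t i) j = t j.
Proof. unfold update; destruct (Nat.eq_dec j i); congruence. Qed.

Definition monotone_fam (E : (nat -> nat) -> nat -> Prop) : Prop :=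
  forall t t', (forall j, t j <= t' j) -> forall p, E t p -> E t' p.

Definition supported_on (I : list nat) (E : (nat -> nat) -> nat -> Prop) : Prop :=
  forall t t', (forall j, In j I -> t j = t' j) -> forall p, E t p -> E t' p.

Lemma ex_common_bound {X : Type} (L : list X) (P : X -> (nat -> nat) -> Prop) :
  (forall x f f', (forall m, f m <= f' m) -> P x f -> P x f') ->
  (forall x, In x L -> exists f, P x f) -> exists f, forall x, In x L -> P x f.
Proof.
  intros P_mono; induction L as [|x L IH]; intros HL.
  - exists (fun _ => 0); intros x [].
  - destruct (HL x (or_introl eq_refl)) as [f1 Hf1].
    destruct IH as [f2 Hf2]; [intros y Hy; apply HL; right; exact Hy|].
    exists (fun m => max (f1 m) (f2 m)); intros y [<-|Hy].
    + apply (P_mono x f1); auto; intro; lia.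
    + apply (P_mono y f2); auto; intro; lia.
Qed.

Section UniformWitnesses.

Variable w : nat -> nat -> nat.

Definition uniformly_witnessed (E : (nat -> nat) -> nat -> Prop) (f : nat -> nat) : Prop :=
  forall t, (exists p, E t p) -> exists p, E t p /\ forall m, w p m <= f m.

Lemma uniformly_witnessed_mono E f f' :
  (forall m, f m <= f' m) -> uniformly_witnessed E f -> uniformly_witnessed E f'.
Proof.
  intros Hff' Hf t Ht; destruct (Hf t Ht) as [p [Ep Hp]].
  exists p; split; [exact Ep|]; intro m; specialize (Hp m); specialize (Hff' m); lia.
Qed.

(* Either t dominates the witness parameter u on I, and the fixed witness a
   works, or t falls below u at some i in I, a case covered by one of the
   finitely many families obtained by freezing coordinate i. *)
Lemma uniformly_witnessed_step I E u a F :
  monotone_fam E -> supported_on I E -> E u a ->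
  (forall i v, In i I -> v < u i -> uniformly_witnessed (fun t => E (update t i v)) F) ->
  uniformly_witnessed E (fun m => max (w a m) (F m)).
Proof.
  intros E_mono E_supp Eua HF t [x Etx].
  destruct (classic (exists i, In i I /\ t i < u i)) as [[i [Hi Hlt]]|Hge].
  - destruct (HF i (t i) Hi Hlt t) as [p [Ep Hp]].
    { exists x; apply (E_mono t); auto; intro j; rewrite update_id; lia. }
    exists p; split.
    + apply (E_mono (update t i (t i))); auto; intro j; rewrite update_id; lia.
    + intro m; specialize (Hp m); lia.
  - exists a; split; [|intro m; lia].
    apply (E_supp (fun j => max (t j) (u j))).
    + intros j Hj; destruct (le_lt_dec (u j) (t j)); [lia|].
      exfalso; apply Hge; eauto.
    + apply (E_mono u); auto; intro; lia.
Qed.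

Lemma ex_uniformly_witnessed n : forall I E, length I <= n ->
  monotone_fam E -> supported_on I E -> exists f, uniformly_witnessed E f.
Proof.
  induction n as [|n IHn]; intros I E HI E_mono E_supp;
    destruct (classic (exists u a, E u a)) as [[u [a Eua]]|Hempty];
    try solve [exists (fun _ => 0); intros t [p Ep]; exfalso; eauto].
  - destruct I as [|i0 I]; [|simpl in HI; lia].
    exists (fun m => max (w a m) 0).
    apply (uniformly_witnessed_step nil E u a); auto; intros i v [].
  - assert (Hfrozen : exists F, forall i, In i I -> forall v, v < u i ->
               uniformly_witnessed (fun t => E (update t i v)) F).
    { apply ex_common_bound.
      { intros i f f' Hff' Hf v Hv; exact (uniformly_witnessed_mono _ _ _ Hff' (Hf v Hv)). }
      intros i Hi.
      destruct (ex_common_bound (seq 0 (u i))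
                  (fun v => uniformly_witnessed (fun t => E (update t i v))))
        as [F HF].
      { intros v; apply uniformly_witnessed_mono. }
      { intros v _; apply (IHn (remove Nat.eq_dec i I)).
        - pose proof (remove_length_lt Nat.eq_dec I i Hi); lia.
        - intros t t' Htt p; apply E_mono; intro j; unfold update.
          destruct (Nat.eq_dec j i); auto.
        - intros t t' Htt p; apply E_supp; intros j Hj; unfold update.
          destruct (Nat.eq_dec j i); auto.
          apply Htt, in_in_remove; auto. }
      exists F; intros v Hv; apply HF, in_seq; lia. }
    destruct Hfrozen as [F HF].
    exists (fun m => max (w a m) (F m)).
    apply (uniformly_witnessed_step I E u a F); auto.
Qed.

End UniformWitnesses.

Fixpoint prefix_max (f : nat -> nat) (n : nat) : nat :=
  match n with
  | 0 => f 0
  | Datatypes.S n' => max (prefix_max f n') (f n)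
  end.

Lemma le_prefix_max f L n : L <= n -> f L <= prefix_max f n.
Proof.
  induction n as [|n IHn]; intros HL; simpl.
  - replace L with 0 by lia; lia.
  - destruct (Nat.eq_dec L (Datatypes.S n)) as [->|]; [lia|].
    specialize (IHn ltac:(lia)); lia.
Qed.

Section CoverByPrefix.

Variable T : nat -> nat -> nat -> Prop.
Hypothesis T_succ : forall n k i, T n (Datatypes.S k) i -> T n k i.
Hypothesis T_exhaust : forall n i, ~ (forall k, T n k i).

Lemma T_antitone n k k' i : k <= k' -> T n k' i -> T n k i.
Proof. induction 1; auto. Qed.

Definition exit_index (n i : nat) : nat := epsilon (inhabits 0) (fun k => ~ T n k i).

Lemma not_T_after_exit n i k : exit_index n i <= k -> ~ T n k i.
Proof.
  intros Hk HT.
  apply (epsilon_spec (inhabits 0) (fun k => ~ T n k i)).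
  - apply not_all_ex_not, T_exhaust.
  - exact (T_antitone _ _ _ _ Hk HT).
Qed.

Definition avoiding (A : nat -> Prop) (L : nat) (t : nat -> nat) (i : nat) : Prop :=
  A i /\ forall j, j < L -> ~ T j (t j) i.

Lemma avoiding_monotone A L : monotone_fam (avoiding A L).
Proof.
  intros t t' Htt i [Ai Hav]; split; [exact Ai|].
  intros j Hj HT; apply (Hav j Hj), (T_antitone _ _ _ _ (Htt j) HT).
Qed.

Lemma avoiding_supported A L : supported_on (seq 0 L) (avoiding A L).
Proof.
  intros t t' Htt i [Ai Hav]; split; [exact Ai|].
  intros j Hj; rewrite <- Htt; [auto|apply in_seq; lia].
Qed.

Definition exit_profile (i n : nat) : nat := exit_index n i.

Definition witness_bound (A : nat -> Prop) (L : nat) : nat -> nat :=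
  epsilon (inhabits (fun _ => 0)) (uniformly_witnessed exit_profile (avoiding A L)).

Lemma witness_bound_spec A L :
  uniformly_witnessed exit_profile (avoiding A L) (witness_bound A L).
Proof.
  unfold witness_bound; apply epsilon_spec.
  apply (ex_uniformly_witnessed _ L (seq 0 L)).
  - rewrite length_seq; lia.
  - apply avoiding_monotone.
  - apply avoiding_supported.
Qed.

Lemma covered_by_prefix A L g :
  (forall n, L <= n -> witness_bound A L n <= g n) ->
  (forall i, A i -> exists n, T n (g n) i) ->
  forall i, A i -> exists j, j < L /\ T j (g j) i.
Proof.
  intros Hg A_cov i Ai; apply NNPP; intro Hnot.
  destruct (witness_bound_spec A L g) as [p [[Ap Hav] Hp]].
  { exists i; split; [exact Ai|]; intros j Hj HT; apply Hnot; eauto. }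
  destruct (A_cov p Ap) as [n HT].
  destruct (le_lt_dec L n) as [HLn|HnL].
  - apply (not_T_after_exit n p (g n)); [|exact HT].
    specialize (Hp n); specialize (Hg n HLn); unfold exit_profile in Hp; lia.
  - exact (Hav n HnL HT).
Qed.

End CoverByPrefix.

Theorem lemma4p2 (d : nat -> cantor) (Hd : dense_enum d)
  (B : (nat -> Prop) -> Prop) (HB : bool_alg B)
  (HBcard : lt_bounding {A : nat -> Prop | B A})
  (S : nat -> nat -> nat -> Prop) (HS : s_family d S)
  (HSB : forall n k, B (S n k)) :
  exists g0 : nat -> nat,
    forall g : nat -> nat, (forall n, (g0 n <= g n)%nat) ->
    forall A : nat -> Prop, B A -> (forall i, A i -> X_g S g i) ->
    exists N : nat, forall i, A i -> exists j, (j <= N)%nat /\ S j (g j) i.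
Proof.
  assert (S_succ : forall n k i, S n (Datatypes.S k) i -> S n k i)
    by (intros n; apply (HS n)).
  assert (S_exhaust : forall n i, ~ (forall k, S n k i)) by (intros n; apply (HS n)).
  destruct (HBcard (fun A n => prefix_max (fun L => witness_bound S (proj1_sig A) L n) n))
    as [g0 Hg0].
  exists g0; intros g Hg A HA A_cov.
  destruct (Hg0 (exist _ A HA)) as [m Hm].
  exists m; intros i Ai.
  destruct (covered_by_prefix S S_succ S_exhaust A m g) with (i := i)
    as [j [Hj HSj]]; auto.
  - intros n Hn; specialize (Hm n Hn); specialize (Hg n); simpl in Hm.
    pose proof (le_prefix_max (fun L => witness_bound S A L n) m n Hn); simpl in *; lia.
  - exists j; split; [lia|exact HSj].
Qed.
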